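(* $\Sigma=\bigcup_{n\ge0}(\mathcal S_n\cup\mathcal S'_n)=\mathcal S\cap\mathcal R^4$, where $\mathcal S$ is the unit sphere of $\mathbb{R}^4$.
   Context: Let $\tau=(1+\sqrt5)/2$, $\tau'=(1-\sqrt5)/2$, and $\mathcal R=\mathbb{Z}[\frac12,\tau]=\{(a+b\tau)/2^n: a,b\in\mathbb{Z},\ n\ge0\}$. Let $\Delta\subset\mathbb{R}^4$ be the set of 120 vectors consisting of: the 8 vectors obtained from $(\pm1,0,0,0)$ by permuting coordinates; the 16 vectors $\frac12(\pm1,\pm1,\pm1,\pm1)$; and the 96 vectors obtained from $\frac12(0,\pm1,\pm\tau',\pm\tau)$ (all sign choices) by even permutations of the coordinates. Let $\Delta'$ be the image of $\Delta$ under the Galois conjugation $\tau\leftrightarrow\tau'$ applied to each coordinate. For a unit vector $a$, $r_a(x)=x-2(x\cdot a)a$. Let $H^\infty$ be the group generated by all $r_a$, $a\in\Delta\cup\Delta'$, and $\Sigma=\{w(a): w\in H^\infty,\ a\in\Delta\cup\Delta'\}$. Let $\mathbb F_4=\mathbb{Z}[\tau]/2\mathbb{Z}[\tau]$, $\bar y$ the coordinatewise reduction of $y\in\mathbb{Z}[\tau]^4$, $A\subset\mathbb F_4^4$ the span of $(\bar1,\bar1,\bar1,\bar1)$ and $(\bar0,\bar1,\bar{\tau'},\bar\tau)$, $A'$ the span of $(\bar1,\bar1,\bar1,\bar1)$ and $(\bar0,\bar1,\bar\tau,\bar{\tau'})$. For $n\ge1$, $\mathcal S_n=\{x\in2^{-n}\mathbb{Z}[\tau]^4: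 x\cdot x=1,\ \overline{2^nx}\in A\setminus\{0\}\}$, $\mathcal S'_n$ likewise with $A'$; and $\mathcal S_0=\mathcal S'_0$ is the set of 8 vectors obtained from $(\pm1,0,0,0)$ by permuting coordinates. *)

From Stdlib Require Import Reals List Permutation.
Import ListNotations.
Open Scope R_scope.

Definition tau : R := (1 + sqrt 5) / 2.
Definition tau' : R := (1 - sqrt 5) / 2.

Record V4 := mkV { c0 : R; c1 : R; c2 : R; c3 : R }.

Definition dot (x y : V4) : R :=
  c0 x * c0 y + c1 x * c1 y + c2 x * c2 y + c3 x * c3 y.
Definition vadd (x y : V4) : V4 :=
  mkV (c0 x + c0 y) (c1 x + c1 y) (c2 x + c2 y) (c3 x + c3 y).
Definition vscale (k : R) (x : V4) : V4 :=
  mkV (k * c0 x) (k * c1 x) (k * c2 x) (k * c3 x).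
Definition vsub (x y : V4) : V4 := vadd x (vscale (-1) y).
Definition coords (x : V4) : list R := [c0 x; c1 x; c2 x; c3 x].
Definition vec_of (l : list R) : V4 :=
  mkV (nth 0 l 0) (nth 1 l 0) (nth 2 l 0) (nth 3 l 0).

Definition refl (a x : V4) : V4 := vsub x (vscale (2 * dot x a) a).

Definition is_sign (s : R) : Prop := s = 1 \/ s = -1.

Definition even_perms : list (list nat) :=
  [[0;1;2;3]%nat; [0;2;3;1]%nat; [0;3;1;2]%nat; [1;0;3;2]%nat;
   [1;2;0;3]%nat; [1;3;2;0]%nat; [2;0;1;3]%nat; [2;1;3;0]%nat;
   [2;3;0;1]%nat; [3;0;2;1]%nat; [3;1;0;2]%nat; [3;2;1;0]%nat].

Definition permute (p : list nat) (base : list R) : V4 :=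
  vec_of (map (fun k => nth k base 0) p).

Definition in_Delta (x : V4) : Prop :=
  (exists s l, is_sign s /\ Permutation l [s; 0; 0; 0] /\ x = vec_of l)
  \/
  (exists s0 s1 s2 s3, is_sign s0 /\ is_sign s1 /\ is_sign s2 /\ is_sign s3 /\
     x = mkV (s0 / 2) (s1 / 2) (s2 / 2) (s3 / 2))
  \/
  (exists p s1 s2 s3, In p even_perms /\ is_sign s1 /\ is_sign s2 /\ is_sign s3 /\
     x = permute p [0; s1 / 2; s2 * tau' / 2; s3 * tau / 2]).

Definition in_Rring (y : R) : Prop :=
  exists (a b : Z) (n : nat), y = (IZR a + IZR b * tau) / 2 ^ n.

(* Galois conjugation tau <-> tau' on Z[1/2,tau], as a relation y |-> z *)
Definition galconj (y z : R) : Prop :=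
  exists (a b : Z) (n : nat),
    y = (IZR a + IZR b * tau) / 2 ^ n /\ z = (IZR a + IZR b * tau') / 2 ^ n.

Definition in_Delta' (z : V4) : Prop :=
  exists x, in_Delta x /\
    galconj (c0 x) (c0 z) /\ galconj (c1 x) (c1 z) /\
    galconj (c2 x) (c2 z) /\ galconj (c3 x) (c3 z).

Definition in_gen (a : V4) : Prop := in_Delta a \/ in_Delta' a.

(* Since every r_a is an involution, the generated group is the closure of
   the identity under left composition with generators. *)
Inductive in_Hinf : (V4 -> V4) -> Prop :=
  | Hinf_id : in_Hinf (fun x => x)
  | Hinf_step : forall a w, in_gen a -> in_Hinf w -> in_Hinf (fun x => refl a (w x)).

Definition in_Sigma (x : V4) : Prop :=
  exists w a, in_Hinf w /\ in_gen a /\ x = w a.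

Definition in_Ztau (y : R) : Prop := exists a b : Z, y = IZR a + IZR b * tau.
Definition in_Ztau4 (y : V4) : Prop := Forall in_Ztau (coords y).
(* y in 2 Z[tau], i.e. reduction of y in F_4 = Z[tau]/2Z[tau] is 0 *)
Definition red_zero (y : R) : Prop := exists a b : Z, y = 2 * (IZR a + IZR b * tau).

Definition ones : V4 := mkV 1 1 1 1.
Definition vA : V4 := mkV 0 1 tau' tau.    (* A  = span(1111, (0,1,tau',tau)) *)
Definition vA' : V4 := mkV 0 1 tau tau'.   (* A' = span(1111, (0,1,tau,tau')) *)

(* For y in Z[tau]^4: reduction of y mod 2 lies in the F_4-span of the
   reductions of u and v, i.e. ybar = cbar1 ubar + cbar2 vbar for some
   c1, c2 in Z[tau] (every element of F_4 lifts to Z[tau]). *)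
Definition red_in_span (u v y : V4) : Prop :=
  exists k1 k2, in_Ztau k1 /\ in_Ztau k2 /\
    Forall red_zero (coords (vsub y (vadd (vscale k1 u) (vscale k2 v)))).
Definition red_nonzero (y : V4) : Prop := ~ Forall red_zero (coords y).

Definition in_S0 (x : V4) : Prop :=
  exists s l, is_sign s /\ Permutation l [s; 0; 0; 0] /\ x = vec_of l.

Definition in_Sn_gen (v : V4) (n : nat) (x : V4) : Prop :=
  match n with
  | O => in_S0 x
  | S _ => let y := vscale (2 ^ n) x in
           in_Ztau4 y /\ dot x x = 1 /\ red_in_span ones v y /\ red_nonzero y
  end.
Definition in_Sn := in_Sn_gen vA.
Definition in_Sn' := in_Sn_gen vA'.

From Pilot Require Import Defs.
From Stdlib Require Import Reals List Permutation ZArith Lia Lra Bool.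
Import ListNotations.
Import Defs.
Open Scope R_scope.

(* Every x in Z[1/2,tau]^4 has a least level N with X := 2^N x in Z[tau]^4.  For a root a
   with 2a in Z[tau]^4 one has 2^(N+1) r_a(x) = 2X - (X.2a) 2a, so whether r_a lowers the
   level only depends on X mod 4.  If x is a unit vector and N > 0, then X.X = 4^N forces
   X.X = 0 mod 4, and an exhaustive check of the residues mod 4 shows, for every such X that
   is not even, that its reduction mod 2 lies in A or A' (so x lies in S_N or S'_N), and that
   one reflection, or two of which the first keeps the level, bring x down to level N - 1.
   By descent every unit vector of Z[1/2,tau]^4 lies in Sigma.  Conversely the roots and
   their reflections preserve the unit sphere of Z[1/2,tau]^4, and at level 0 the only unit
   vectors are the signed basis vectors, as 1 and tau are linearly independent over Q. *)

Lemma sqrt5_sq : sqrt 5 * sqrt 5 = 5.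
Proof. apply sqrt_sqrt; lra. Qed.

Lemma tau_sq : tau * tau = tau + 1.
Proof. unfold tau. pose proof sqrt5_sq. nra. Qed.

Lemma tau'_eq : tau' = 1 - tau.
Proof. unfold tau, tau'. lra. Qed.

Lemma tau'_sq : tau' * tau' = tau' + 1.
Proof. rewrite tau'_eq. pose proof tau_sq. nra. Qed.

Lemma golden_mul t a b a' b' : t * t = t + 1 ->
  (a + b * t) * (a' + b' * t) = (a * a' + b * b') + (a * b' + b * a' + b * b') * t.
Proof.
  intros H. transitivity (a * a' + b * b' * (t * t) + (a * b' + b * a') * t); [ring|].
  rewrite H. ring.
Qed.

Lemma five_dvd_sq (z : Z) : (5 | z * z)%Z -> (5 | z)%Z.
Proof.
  intros H. apply Z.mod_divide in H; [|lia]. apply Z.mod_divide; [lia|].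
  rewrite Z.mul_mod in H by lia.
  assert (z mod 5 = 0 \/ z mod 5 = 1 \/ z mod 5 = 2 \/ z mod 5 = 3 \/ z mod 5 = 4)%Z
    as [E|[E|[E|[E|E]]]] by (pose proof (Z.mod_pos_bound z 5 ltac:(lia)); lia);
    rewrite E in H; cbv in H; lia.
Qed.

Lemma sq_eq_5_sq (p q : Z) : (p * p = 5 * (q * q))%Z -> q = 0%Z.
Proof.
  remember (Z.abs_nat q) as n eqn:En. revert p q En.
  induction n as [n IH] using lt_wf_ind. intros p q En H.
  assert (Hp : (5 | p)%Z) by (apply five_dvd_sq; rewrite H; apply Z.divide_mul_l, Z.divide_refl).
  destruct Hp as [p' ->].
  assert (Hq : (5 | q)%Z) by (apply five_dvd_sq; exists (p' * p')%Z; nia).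
  destruct Hq as [q' ->].
  destruct (Z.eq_dec q' 0) as [-> | Hq']; [lia|].
  exfalso. apply Hq', (IH (Z.abs_nat q') ltac:(lia) p'); [reflexivity | nia].
Qed.

Lemma Ztau_eq0 (a b : Z) : IZR a + IZR b * tau = 0 -> a = 0%Z /\ b = 0%Z.
Proof.
  intros H.
  assert (Hb : b = 0%Z).
  { apply (sq_eq_5_sq (2 * a + b)), eq_IZR.
    assert (E : 2 * IZR a + IZR b = - (IZR b * sqrt 5)) by (unfold tau in H; lra).
    rewrite !mult_IZR, plus_IZR, mult_IZR, E.
    transitivity (IZR b * IZR b * (sqrt 5 * sqrt 5)); [ring | rewrite sqrt5_sq; ring]. }
  subst b. split; [apply eq_IZR; lra | reflexivity].
Qed.

(** * The ring Z[tau], encoded by coordinate pairs *)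

Definition zt : Type := (Z * Z)%type.

Definition ev (p : zt) : R := IZR (fst p) + IZR (snd p) * tau.

Definition zadd (p q : zt) : zt := (fst p + fst q, snd p + snd q)%Z.
Definition zsub (p q : zt) : zt := (fst p - fst q, snd p - snd q)%Z.
Definition zmul (p q : zt) : zt :=
  (fst p * fst q + snd p * snd q, fst p * snd q + snd p * fst q + snd p * snd q)%Z.
Definition zconj (p : zt) : zt := (fst p + snd p, - snd p)%Z.
Definition zrem (m : Z) (p : zt) : zt := (fst p mod m, snd p mod m)%Z.
Definition zquo (m : Z) (p : zt) : zt := (fst p / m, snd p / m)%Z.
Definition zdvd (m : Z) (p : zt) : bool := (fst p mod m =? 0)%Z && (snd p mod m =? 0)%Z.

Lemma ev_int (k : Z) : ev (k, 0%Z) = IZR k.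
Proof. unfold ev; simpl; ring. Qed.

Lemma ev_add p q : ev (zadd p q) = ev p + ev q.
Proof. unfold ev, zadd; simpl. rewrite !plus_IZR. ring. Qed.

Lemma ev_sub p q : ev (zsub p q) = ev p - ev q.
Proof. unfold ev, zsub; simpl. rewrite !minus_IZR. ring. Qed.

Lemma ev_mul p q : ev (zmul p q) = ev p * ev q.
Proof.
  unfold ev, zmul; simpl. rewrite (golden_mul _ _ _ _ _ tau_sq), !plus_IZR, !mult_IZR.
  reflexivity.
Qed.

Lemma ev_conj p : ev (zconj p) = IZR (fst p) + IZR (snd p) * tau'.
Proof. unfold ev, zconj; simpl. rewrite plus_IZR, opp_IZR, tau'_eq. ring. Qed.

Lemma ev_inj p q : ev p = ev q -> p = q.
Proof.
  destruct p as [a b], q as [c d]. unfold ev; simpl. intros H.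
  destruct (Ztau_eq0 (a - c) (b - d)) as [H1 H2]; [rewrite !minus_IZR; lra|].
  f_equal; lia.
Qed.

Lemma ev_rem_quo m p : m <> 0%Z -> ev p = ev (zrem m p) + IZR m * ev (zquo m p).
Proof.
  intros Hm. destruct p as [a b]. unfold ev, zrem, zquo; simpl.
  rewrite (Z.div_mod a m Hm) at 1. rewrite (Z.div_mod b m Hm) at 1.
  rewrite !plus_IZR, !mult_IZR. ring.
Qed.

Lemma zdvd_quo m p : m <> 0%Z -> zdvd m p = true -> ev p = IZR m * ev (zquo m p).
Proof.
  intros Hm H. unfold zdvd in H. apply andb_true_iff in H as [H1 H2].
  apply Z.eqb_eq in H1, H2.
  rewrite (ev_rem_quo m p Hm). unfold zrem. rewrite H1, H2. unfold ev; simpl. ring.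
Qed.

Lemma zdvd_of_ev m p q : m <> 0%Z -> ev p = IZR m * ev q -> zdvd m p = true.
Proof.
  intros Hm H. replace p with (zmul (m, 0%Z) q).
  - unfold zdvd, zmul; cbn [fst snd]. apply andb_true_iff.
    split; apply Z.eqb_eq, Z.mod_divide; trivial; [exists (fst q) | exists (snd q)]; ring.
  - apply ev_inj. rewrite ev_mul, ev_int. auto.
Qed.

Record ZV := mkZ { w0 : zt; w1 : zt; w2 : zt; w3 : zt }.

Definition zvec (Y : ZV) : V4 := mkV (ev (w0 Y)) (ev (w1 Y)) (ev (w2 Y)) (ev (w3 Y)).

Definition zvmap (f : zt -> zt) (Y : ZV) : ZV := mkZ (f (w0 Y)) (f (w1 Y)) (f (w2 Y)) (f (w3 Y)).
Definition zvmap2 (f : zt -> zt -> zt) (Y U : ZV) : ZV :=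
  mkZ (f (w0 Y) (w0 U)) (f (w1 Y) (w1 U)) (f (w2 Y) (w2 U)) (f (w3 Y) (w3 U)).
Definition zvadd : ZV -> ZV -> ZV := zvmap2 zadd.
Definition zvsub : ZV -> ZV -> ZV := zvmap2 zsub.
Definition zvscale (k : zt) : ZV -> ZV := zvmap (zmul k).
Definition zvconj : ZV -> ZV := zvmap zconj.
Definition zvquo (m : Z) : ZV -> ZV := zvmap (zquo m).
Definition zvrem (m : Z) : ZV -> ZV := zvmap (zrem m).
Definition zdot (Y U : ZV) : zt :=
  zadd (zadd (zadd (zmul (w0 Y) (w0 U)) (zmul (w1 Y) (w1 U))) (zmul (w2 Y) (w2 U)))
       (zmul (w3 Y) (w3 U)).
Definition zvdvd (m : Z) (Y : ZV) : bool :=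
  zdvd m (w0 Y) && zdvd m (w1 Y) && zdvd m (w2 Y) && zdvd m (w3 Y).

Lemma V4eq (x y : V4) : c0 x = c0 y -> c1 x = c1 y -> c2 x = c2 y -> c3 x = c3 y -> x = y.
Proof. destruct x, y; simpl; intros; subst; reflexivity. Qed.

Ltac vec_ring := apply V4eq; unfold vadd, vsub, vscale, refl, dot; simpl; ring.

Lemma zvec_add Y U : zvec (zvadd Y U) = vadd (zvec Y) (zvec U).
Proof. apply V4eq; simpl; apply ev_add. Qed.

Lemma zvec_sub Y U : zvec (zvsub Y U) = vsub (zvec Y) (zvec U).
Proof. apply V4eq; simpl; rewrite ev_sub; ring. Qed.

Lemma zvec_scale k Y : zvec (zvscale k Y) = vscale (ev k) (zvec Y).
Proof. apply V4eq; simpl; apply ev_mul. Qed.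

Lemma ev_zdot Y U : ev (zdot Y U) = dot (zvec Y) (zvec U).
Proof. unfold zdot, dot; simpl. rewrite !ev_add, !ev_mul. reflexivity. Qed.

Lemma zvec_rem_quo m Y : m <> 0%Z ->
  zvec Y = vadd (zvec (zvrem m Y)) (vscale (IZR m) (zvec (zvquo m Y))).
Proof. intros Hm. apply V4eq; simpl; apply ev_rem_quo, Hm. Qed.

Lemma zvdvd_quo m Y : m <> 0%Z -> zvdvd m Y = true -> zvec Y = vscale (IZR m) (zvec (zvquo m Y)).
Proof.
  intros Hm H. unfold zvdvd in H. rewrite !andb_true_iff in H.
  destruct H as [[[H0 H1] H2] H3].
  apply V4eq; simpl; apply zdvd_quo; assumption.
Qed.

Lemma zvdvd_of_zvec m Y Q : m <> 0%Z -> zvec Y = vscale (IZR m) (zvec Q) -> zvdvd m Y = true.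
Proof.
  intros Hm H. unfold zvdvd. rewrite !andb_true_iff.
  repeat split; eapply zdvd_of_ev; try exact Hm;
    [apply (f_equal c0) in H | apply (f_equal c1) in H
    | apply (f_equal c2) in H | apply (f_equal c3) in H]; exact H.
Qed.

Lemma Forall_coords (P : R -> Prop) x :
  Forall P (coords x) <-> P (c0 x) /\ P (c1 x) /\ P (c2 x) /\ P (c3 x).
Proof.
  unfold coords. split.
  - intros H. inversion_clear H as [|? ? H0 H'].
    inversion_clear H' as [|? ? H1 H''].
    inversion_clear H'' as [|? ? H2 H'''].
    inversion_clear H''' as [|? ? H3 _]. auto.
  - intros (H0 & H1 & H2 & H3). repeat constructor; auto.
Qed.

Lemma in_Ztau_ev y : in_Ztau y <-> exists p, y = ev p.
Proof.
  split.
  - intros (a & b & ->). exists (a, b). reflexivity.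
  - intros ([a b] & ->). exists a, b. reflexivity.
Qed.

Lemma in_Ztau4_zvec X : in_Ztau4 X <-> exists Y, X = zvec Y.
Proof.
  unfold in_Ztau4. rewrite Forall_coords, !in_Ztau_ev. split.
  - intros ((p0 & E0) & (p1 & E1) & (p2 & E2) & (p3 & E3)).
    exists (mkZ p0 p1 p2 p3). apply V4eq; assumption.
  - intros (Y & ->). repeat split; eexists; reflexivity.
Qed.

Lemma red_zero_zvec X : Forall red_zero (coords X) <-> exists Q, X = vscale 2 (zvec Q).
Proof.
  assert (Hred : forall y, red_zero y <-> exists p, y = 2 * ev p).
  { intros y. split.
    - intros (a & b & ->). exists (a, b). reflexivity.
    - intros ([a b] & ->). exists a, b. reflexivity. }
  rewrite Forall_coords, !Hred. split.
  - intros ((p0 & E0) & (p1 & E1) & (p2 & E2) & (p3 & E3)).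
    exists (mkZ p0 p1 p2 p3). apply V4eq; assumption.
  - intros (Q & ->). repeat split; eexists; reflexivity.
Qed.

(** * The ring Z[1/2, tau] and Galois conjugation *)

Lemma pow2_nz n : 2 ^ n <> 0.
Proof. apply pow_nonzero; lra. Qed.

Lemma galconj_Rring y z : galconj y z -> in_Rring y.
Proof. intros (a & b & n & Hy & _). exists a, b, n. exact Hy. Qed.

Lemma galconj_Rring' y z : galconj y z -> in_Rring z.
Proof.
  intros (a & b & n & _ & ->). exists (a + b)%Z, (- b)%Z, n.
  rewrite plus_IZR, opp_IZR, tau'_eq. field. apply pow2_nz.
Qed.

Lemma Rring_galconj y : in_Rring y -> exists z, galconj y z.
Proof. intros (a & b & n & H). eexists. exists a, b, n. split; [exact H | reflexivity]. Qed.

Lemma galconj_int (k : Z) : galconj (IZR k) (IZR k).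
Proof. exists k, 0%Z, 0%nat. simpl. split; field. Qed.

Lemma galconj_add y z y' z' : galconj y z -> galconj y' z' -> galconj (y + y') (z + z').
Proof.
  intros (a & b & n & -> & ->) (a' & b' & n' & -> & ->).
  exists (a * 2 ^ Z.of_nat n' + a' * 2 ^ Z.of_nat n)%Z,
         (b * 2 ^ Z.of_nat n' + b' * 2 ^ Z.of_nat n)%Z, (n + n')%nat.
  rewrite !plus_IZR, !mult_IZR, <- !pow_IZR, pow_add.
  pose proof (pow2_nz n); pose proof (pow2_nz n'). split; field; auto.
Qed.

Lemma galconj_mul y z y' z' : galconj y z -> galconj y' z' -> galconj (y * y') (z * z').
Proof.
  intros (a & b & n & -> & ->) (a' & b' & n' & -> & ->).
  exists (a * a' + b * b')%Z, (a * b' + b * a' + b * b')%Z, (n + n')%nat.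
  rewrite !plus_IZR, !mult_IZR, pow_add.
  pose proof (pow2_nz n); pose proof (pow2_nz n').
  split; rewrite <- golden_mul by (apply tau_sq || apply tau'_sq); field; auto.
Qed.

Lemma galconj_one z : galconj 1 z -> z = 1.
Proof.
  intros (a & b & n & H1 & ->). pose proof (pow2_nz n) as Hn.
  assert (E : (a, b) = (2 ^ Z.of_nat n, 0)%Z).
  { assert (Hab : IZR a + IZR b * tau = 2 ^ n)
      by (rewrite <- (Rmult_1_l (2 ^ n)), H1; field; exact Hn).
    apply ev_inj. unfold ev; simpl. rewrite <- pow_IZR. lra. }
  injection E as -> ->. rewrite <- pow_IZR. field. exact Hn.
Qed.

Lemma Rring_add y y' : in_Rring y -> in_Rring y' -> in_Rring (y + y').
Proof.
  intros H H'. destruct (Rring_galconj _ H), (Rring_galconj _ H').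
  eapply galconj_Rring, galconj_add; eauto.
Qed.

Lemma Rring_mul y y' : in_Rring y -> in_Rring y' -> in_Rring (y * y').
Proof.
  intros H H'. destruct (Rring_galconj _ H), (Rring_galconj _ H').
  eapply galconj_Rring, galconj_mul; eauto.
Qed.

Lemma Rring_int (k : Z) : in_Rring (IZR k).
Proof. eapply galconj_Rring, galconj_int. Qed.

Lemma Rring_Ztau n y : in_Ztau (2 ^ n * y) -> in_Rring y.
Proof.
  intros (a & b & H). exists a, b, n. rewrite <- H. field. apply pow2_nz.
Qed.

Lemma Ztau_Rring y : in_Rring y -> exists n, forall m, (n <= m)%nat -> in_Ztau (2 ^ m * y).
Proof.
  intros (a & b & n & ->). exists n. intros m Hm.
  exists (a * 2 ^ Z.of_nat (m - n))%Z, (b * 2 ^ Z.of_nat (m - n))%Z.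
  rewrite !mult_IZR, <- !pow_IZR. replace m with (m - n + n)%nat at 1 by lia.
  rewrite pow_add. field. apply pow2_nz.
Qed.

Lemma Rring_half y : in_Rring y -> in_Rring (y / 2).
Proof. intros (a & b & n & ->). exists a, b, (S n). simpl. field. apply pow2_nz. Qed.

Lemma Rring_tau : in_Rring tau.
Proof. exists 0%Z, 1%Z, 0%nat. simpl. field. Qed.

Lemma Rring_tau' : in_Rring tau'.
Proof. exists 1%Z, (-1)%Z, 0%nat. rewrite tau'_eq. simpl. field. Qed.

Lemma Rring_0 : in_Rring 0.
Proof. apply (Rring_int 0). Qed.

Lemma Rring_sign s : is_sign s -> in_Rring s.
Proof. intros [-> | ->]; [apply (Rring_int 1) | apply (Rring_int (-1))]. Qed.

Lemma sign_sq s : is_sign s -> s * s = 1.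
Proof. intros [-> | ->]; ring. Qed.

(** * Sigma lies on the unit sphere of Z[1/2, tau]^4 *)

Definition sphere_R4 (x : V4) : Prop := dot x x = 1 /\ Forall in_Rring (coords x).

Fixpoint sumsq (l : list R) : R :=
  match l with [] => 0 | y :: l => y * y + sumsq l end.

Lemma sumsq_perm l l' : Permutation l l' -> sumsq l = sumsq l'.
Proof. induction 1; simpl; lra. Qed.

Lemma sphere_signed_basis s l : is_sign s -> Permutation l [s; 0; 0; 0] -> sphere_R4 (vec_of l).
Proof.
  intros Hs Hp. pose proof (Permutation_length Hp) as Hl.
  assert (HR : forall y, In y l -> in_Rring y).
  { intros y Hy. apply (Permutation_in _ Hp) in Hy.
    destruct Hy as [<- | [<- | [<- | [<- | []]]]]; auto using Rring_sign, Rring_0. }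
  pose proof (sumsq_perm _ _ Hp) as Hsq. simpl in Hsq. rewrite (sign_sq s Hs) in Hsq.
  destruct l as [|y0 [|y1 [|y2 [|y3 [|]]]]]; simpl in Hl; try lia.
  split.
  - unfold dot, vec_of; simpl in *. lra.
  - apply Forall_coords. simpl. repeat split; apply HR; simpl; tauto.
Qed.

Lemma permute_coords p b : nth 0 b 0 = 0 ->
  permute p b = mkV (nth (nth 0 p 0%nat) b 0) (nth (nth 1 p 0%nat) b 0)
                    (nth (nth 2 p 0%nat) b 0) (nth (nth 3 p 0%nat) b 0).
Proof.
  intros H0.
  assert (K : forall i, nth i (map (fun k => nth k b 0) p) 0 = nth (nth i p 0%nat) b 0).
  { intros i. transitivity (nth i (map (fun k => nth k b 0) p) ((fun k => nth k b 0) 0%nat)).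
    - cbv beta. rewrite H0. reflexivity.
    - exact (map_nth (fun k => nth k b 0) p 0%nat i). }
  unfold permute, vec_of. rewrite !K. reflexivity.
Qed.

Lemma sphere_golden p s1 s2 s3 : In p even_perms -> is_sign s1 -> is_sign s2 -> is_sign s3 ->
  sphere_R4 (permute p [0; s1 / 2; s2 * tau' / 2; s3 * tau / 2]).
Proof.
  intros Hp H1 H2 H3. rewrite permute_coords by reflexivity. split.
  - transitivity ((s1 * s1 + (s2 * s2) * (tau' * tau') + (s3 * s3) * (tau * tau)) / 4).
    + simpl in Hp.
      repeat (destruct Hp as [<- | Hp]; [unfold dot; simpl; field |]). destruct Hp.
    + rewrite (sign_sq s1), (sign_sq s2), (sign_sq s3), tau_sq, tau'_sq, tau'_eq by assumption.
      field.
  - assert (HR : forall k, in_Rring (nth k [0; s1 / 2; s2 * tau' / 2; s3 * tau / 2] 0)).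
    { intros [|[|[|[|k]]]]; simpl; try destruct k;
        auto using Rring_half, Rring_mul, Rring_sign, Rring_tau, Rring_tau', Rring_0. }
    apply Forall_coords. cbn [c0 c1 c2 c3]. repeat split; apply HR.
Qed.

Lemma sphere_Delta a : in_Delta a -> sphere_R4 a.
Proof.
  intros [(s & l & Hs & Hp & ->) | [(s0 & s1 & s2 & s3 & H0 & H1 & H2 & H3 & ->)
         | (p & s1 & s2 & s3 & Hp & H1 & H2 & H3 & ->)]].
  - eapply sphere_signed_basis; eauto.
  - split.
    + unfold dot; simpl. transitivity ((s0 * s0 + s1 * s1 + s2 * s2 + s3 * s3) / 4); [field|].
      rewrite (sign_sq s0), (sign_sq s1), (sign_sq s2), (sign_sq s3) by assumption. field.
    + apply Forall_coords. cbn [c0 c1 c2 c3]. repeat split; auto using Rring_half, Rring_sign.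
  - apply sphere_golden; assumption.
Qed.

Lemma galconj_dot x z :
  galconj (c0 x) (c0 z) -> galconj (c1 x) (c1 z) ->
  galconj (c2 x) (c2 z) -> galconj (c3 x) (c3 z) ->
  galconj (dot x x) (dot z z).
Proof. intros. unfold dot. repeat apply galconj_add; apply galconj_mul; assumption. Qed.

Lemma sphere_Delta' z : in_Delta' z -> sphere_R4 z.
Proof.
  intros (x & Hx & G0 & G1 & G2 & G3). destruct (sphere_Delta x Hx) as [Hxx _]. split.
  - apply galconj_one. rewrite <- Hxx. apply galconj_dot; assumption.
  - apply Forall_coords. repeat split; eapply galconj_Rring'; eassumption.
Qed.

Lemma sphere_gen a : in_gen a -> sphere_R4 a.
Proof. intros [H | H]; [apply sphere_Delta | apply sphere_Delta']; exact H. Qed.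

Lemma refl_dot a x : dot a a = 1 -> dot (refl a x) (refl a x) = dot x x.
Proof.
  intros H. transitivity (dot x x + 4 * (dot x a) ^ 2 * (dot a a - 1)); [|rewrite H; ring].
  unfold refl, vsub, vadd, vscale, dot; simpl. ring.
Qed.

Lemma refl_involutive a x : dot a a = 1 -> refl a (refl a x) = x.
Proof.
  intros H. assert (E : dot (refl a x) a = - dot x a).
  { transitivity (dot x a - 2 * dot x a * dot a a); [|rewrite H; ring].
    unfold refl, vsub, vadd, vscale, dot; simpl. ring. }
  unfold refl at 1. rewrite E. vec_ring.
Qed.

Lemma dot_Rring x y :
  Forall in_Rring (coords x) -> Forall in_Rring (coords y) -> in_Rring (dot x y).
Proof.
  rewrite !Forall_coords. intros (? & ? & ? & ?) (? & ? & ? & ?).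
  unfold dot. repeat apply Rring_add; apply Rring_mul; assumption.
Qed.

Lemma sphere_refl a x : sphere_R4 a -> sphere_R4 x -> sphere_R4 (refl a x).
Proof.
  intros [Ha Ra] [Hx Rx]. split; [rewrite refl_dot; assumption|].
  assert (Hc : forall y, in_Rring y -> in_Rring (-1 * (2 * dot x a * y))).
  { intros y Hy. apply Rring_mul; [apply (Rring_int (-1))|].
    apply Rring_mul; [apply Rring_mul; [apply (Rring_int 2) | apply dot_Rring] |]; assumption. }
  rewrite Forall_coords in Ra, Rx |- *. unfold refl, vsub, vadd, vscale. cbn [c0 c1 c2 c3].
  repeat split; apply Rring_add; try apply Hc; tauto.
Qed.

Lemma sphere_Hinf w x : in_Hinf w -> sphere_R4 x -> sphere_R4 (w x).
Proof. induction 1; intros Hx; auto using sphere_refl, sphere_gen. Qed.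

Lemma sphere_Sigma x : in_Sigma x -> sphere_R4 x.
Proof. intros (w & a & Hw & Ha & ->). auto using sphere_Hinf, sphere_gen. Qed.

Lemma Sigma_gen a : in_gen a -> in_Sigma a.
Proof. intros H. exists (fun y => y), a. split; [constructor | auto]. Qed.

Lemma Sigma_of_refl a x : in_gen a -> in_Sigma (refl a x) -> in_Sigma x.
Proof.
  intros Ha (w & b & Hw & Hb & E).
  rewrite <- (refl_involutive a x) by apply (sphere_gen a Ha).
  exists (fun y => refl a (w y)), b. rewrite E. split; [constructor|]; auto.
Qed.

Definition half_vec (U : ZV) : V4 := vscale (/ 2) (zvec U).

Definition signs : list Z := [1; -1]%Z.

Definition half_roots : list ZV :=
  flat_map (fun s0 => flat_map (fun s1 => flat_map (fun s2 => map (fun s3 =>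
    mkZ (s0, 0) (s1, 0) (s2, 0) (s3, 0))%Z signs) signs) signs) signs.

Definition golden_base (s1 s2 s3 : Z) : list zt := [(0, 0); (s1, 0); (s2, - s2); (0, s3)]%Z.

Definition zpermute (p : list nat) (b : list zt) : ZV :=
  mkZ (nth (nth 0 p 0%nat) b (0, 0)%Z) (nth (nth 1 p 0%nat) b (0, 0)%Z)
      (nth (nth 2 p 0%nat) b (0, 0)%Z) (nth (nth 3 p 0%nat) b (0, 0)%Z).

Definition golden_roots : list ZV :=
  flat_map (fun p => flat_map (fun s1 => flat_map (fun s2 => map (fun s3 =>
    zpermute p (golden_base s1 s2 s3)) signs) signs) signs) even_perms.

Definition Delta_roots : list ZV := half_roots ++ golden_roots.
Definition roots : list ZV := Delta_roots ++ map zvconj Delta_roots.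

Lemma sign_of_signs s : In s signs -> is_sign (IZR s).
Proof. intros [<- | [<- | []]]; [left | right]; reflexivity. Qed.

Lemma half_vec_golden p s1 s2 s3 :
  half_vec (zpermute p (golden_base s1 s2 s3)) =
  permute p [0; IZR s1 / 2; IZR s2 * tau' / 2; IZR s3 * tau / 2].
Proof.
  rewrite permute_coords by reflexivity.
  assert (E : forall k, / 2 * ev (nth k (golden_base s1 s2 s3) (0, 0)%Z) =
                        nth k [0; IZR s1 / 2; IZR s2 * tau' / 2; IZR s3 * tau / 2] 0).
  { intros [|[|[|[|[|k]]]]]; unfold ev; simpl; rewrite ?opp_IZR, ?tau'_eq; field. }
  apply V4eq; apply E.
Qed.

Lemma Delta_roots_Delta U : In U Delta_roots -> in_Delta (half_vec U).
Proof.
  intros [H | H]%in_app_or.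
  - apply in_flat_map in H as (s0 & S0 & H). apply in_flat_map in H as (s1 & S1 & H).
    apply in_flat_map in H as (s2 & S2 & H). apply in_map_iff in H as (s3 & <- & S3).
    right; left. exists (IZR s0), (IZR s1), (IZR s2), (IZR s3).
    repeat split; try (apply sign_of_signs; assumption).
    apply V4eq; unfold half_vec, vscale, zvec, ev; simpl; field.
  - apply in_flat_map in H as (p & P & H). apply in_flat_map in H as (s1 & S1 & H).
    apply in_flat_map in H as (s2 & S2 & H). apply in_map_iff in H as (s3 & <- & S3).
    right; right. exists p, (IZR s1), (IZR s2), (IZR s3).
    repeat split; try (apply sign_of_signs; assumption); [exact P | apply half_vec_golden].
Qed.

Lemma Delta'_conj U : in_Delta (half_vec U) -> in_Delta' (half_vec (zvconj U)).
Proof.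
  intros H. exists (half_vec U). split; [exact H|].
  assert (G : forall p, galconj (/ 2 * ev p) (/ 2 * ev (zconj p))).
  { intros p. exists (fst p), (snd p), 1%nat. rewrite ev_conj. unfold ev; simpl. split; field. }
  repeat split; apply G.
Qed.

Lemma roots_gen U : In U roots -> in_gen (half_vec U).
Proof.
  intros [H | H]%in_app_or.
  - left. apply Delta_roots_Delta, H.
  - apply in_map_iff in H as (V & <- & H). right. apply Delta'_conj, Delta_roots_Delta, H.
Qed.

(** * The finite certificate *)

(* A subset of [roots], found by a greedy search, that suffices for [certificate]. *)
Definition cert_roots : list ZV := [
  mkZ (0, 0) (0, -1) (1, -1) (1, 0); mkZ (-1, 0) (-1, 0) (1, 0) (-1, 0);
  mkZ (0, 0) (-1, 0) (1, -1) (0, 1); mkZ (-1, 1) (0, -1) (0, 0) (1, 0);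
  mkZ (0, -1) (-1, 1) (1, 0) (0, 0); mkZ (1, -1) (0, 0) (1, 0) (0, 1);
  mkZ (-1, 1) (0, 1) (1, 0) (0, 0); mkZ (0, 1) (1, 0) (-1, 1) (0, 0);
  mkZ (-1, 0) (0, 0) (0, -1) (-1, 1); mkZ (1, 0) (0, -1) (0, 0) (-1, 1);
  mkZ (0, 0) (-1, 1) (0, -1) (-1, 0); mkZ (0, -1) (1, -1) (1, 0) (0, 0);
  mkZ (-1, 0) (-1, 1) (0, 0) (0, -1); mkZ (0, 0) (1, -1) (0, -1) (-1, 0);
  mkZ (0, 1) (-1, 1) (0, 0) (-1, 0); mkZ (1, 0) (1, 0) (1, 0) (1, 0);
  mkZ (0, 0) (-1, 1) (1, 0) (0, 1); mkZ (0, -1) (1, 0) (0, 0) (1, -1);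
  mkZ (-1, 1) (0, 1) (0, 0) (1, 0); mkZ (-1, 0) (0, 0) (0, 1) (1, -1);
  mkZ (0, 1) (0, 0) (1, 0) (1, -1); mkZ (-1, 0) (0, 0) (1, -1) (0, 1);
  mkZ (-1, 1) (0, 0) (0, -1) (-1, 0); mkZ (-1, 0) (0, 0) (0, 1) (-1, 1);
  mkZ (0, 1) (0, 0) (1, 0) (-1, 1); mkZ (0, 0) (-1, 1) (0, 1) (-1, 0);
  mkZ (0, 0) (-1, 1) (-1, 0) (0, 1); mkZ (0, 0) (1, -1) (-1, 0) (0, 1);
  mkZ (1, -1) (1, 0) (0, 0) (0, -1); mkZ (1, 0) (0, 1) (1, -1) (0, 0);
  mkZ (0, -1) (1, 0) (1, -1) (0, 0); mkZ (0, -1) (-1, 1) (-1, 0) (0, 0);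
  mkZ (0, 1) (-1, 0) (1, -1) (0, 0); mkZ (1, 0) (0, -1) (0, 0) (1, -1)
]%Z.

Definition ZV_eq_dec (U V : ZV) : {U = V} + {U <> V}.
Proof. repeat decide equality. Defined.

Lemma cert_roots_roots U : In U cert_roots -> In U roots.
Proof.
  assert (H : forallb (fun U => if in_dec ZV_eq_dec U roots then true else false) cert_roots = true)
    by (vm_compute; reflexivity).
  rewrite forallb_forall in H. intros HU. specialize (H U HU).
  destruct (in_dec ZV_eq_dec U roots); [assumption | discriminate].
Qed.

Definition zrange (m : Z) : list Z := map Z.of_nat (seq 0 (Z.to_nat m)).
Definition residues (m : Z) : list zt := list_prod (zrange m) (zrange m).

Definition zrcomb (Y U : ZV) : ZV := zvsub (zvscale (2, 0)%Z Y) (zvscale (zdot Y U) U).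

(* [vm_compute] evaluates both arguments of [||]; the checks below short-circuit with [if]
   and [exists_lazy] instead. *)
Fixpoint exists_lazy {A : Type} (f : A -> bool) (l : list A) : bool :=
  match l with [] => false | a :: l => if f a then true else exists_lazy f l end.

Lemma exists_lazy_existsb {A : Type} (f : A -> bool) l : exists_lazy f l = existsb f l.
Proof. induction l as [|a l IH]; simpl; [|destruct (f a)]; auto. Qed.

Definition descends_once (R : ZV) : bool :=
  if zvdvd 2 R then true else exists_lazy (fun U => zvdvd 4 (zrcomb R U)) cert_roots.

(* The first reflection keeps the level.  Writing X = R + 4K, the residue mod 4 of its
   result depends on K only through w = K.U mod 2, so every w is tried. *)
Definition descends_twice (R : ZV) : bool :=
  exists_lazy (fun U =>
    if zdvd 2 (zdot R U) then
      forallb (fun w =>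
        descends_once (zvsub R (zvscale (zadd (zquo 2 (zdot R U)) (zmul (2, 0)%Z w)) U)))
      (residues 2)
    else false) cert_roots.

Definition zones : ZV := (mkZ (1, 0) (1, 0) (1, 0) (1, 0))%Z.
Definition zA : ZV := (mkZ (0, 0) (1, 0) (1, -1) (0, 1))%Z.

Definition in_code (V R : ZV) : bool :=
  exists_lazy (fun k1 => exists_lazy (fun k2 =>
    zvdvd 2 (zvsub (zvsub R (zvscale k1 zones)) (zvscale k2 V))) (residues 2)) (residues 2).

Definition residue_ok (R : ZV) : bool :=
  if zvdvd 2 R then true else
  if zdvd 4 (zdot R R) then
    (if descends_once R then true else descends_twice R) &&
    (if in_code zA R then true else in_code (zvconj zA) R)
  else true.

Definition forall_residues (l : list zt) (f : ZV -> bool) : bool :=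
  forallb (fun a => forallb (fun b => forallb (fun c => forallb (fun d =>
    f (mkZ a b c d)) l) l) l) l.

Lemma certificate : forall_residues (residues 4) residue_ok = true.
Proof. vm_compute. reflexivity. Qed.

Lemma in_zrange m a : (0 <= a < m)%Z -> In a (zrange m).
Proof.
  intros H. apply in_map_iff. exists (Z.to_nat a). split; [lia|].
  apply in_seq. lia.
Qed.

Lemma zrem_residues m p : (0 < m)%Z -> In (zrem m p) (residues m).
Proof.
  intros Hm. apply in_prod; apply in_zrange, Z.mod_pos_bound, Hm.
Qed.

Lemma forall_residues_spec l f R : forall_residues l f = true ->
  In (w0 R) l -> In (w1 R) l -> In (w2 R) l -> In (w3 R) l -> f R = true.
Proof.
  unfold forall_residues. intros H H0 H1 H2 H3. destruct R as [p0 p1 p2 p3]. simpl in *.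
  rewrite forallb_forall in H. specialize (H p0 H0).
  rewrite forallb_forall in H. specialize (H p1 H1).
  rewrite forallb_forall in H. specialize (H p2 H2).
  rewrite forallb_forall in H. exact (H p3 H3).
Qed.

Lemma residue_cert Y :
  zvdvd 2 (zvrem 4 Y) = false -> zdvd 4 (zdot (zvrem 4 Y) (zvrem 4 Y)) = true ->
  (descends_once (zvrem 4 Y) = true \/ descends_twice (zvrem 4 Y) = true) /\
  (in_code zA (zvrem 4 Y) = true \/ in_code (zvconj zA) (zvrem 4 Y) = true).
Proof.
  intros Hodd Hnorm.
  assert (HR : forall p, In (zrem 4 p) (residues 4)) by (intros; apply zrem_residues; lia).
  pose proof (forall_residues_spec _ _ (zvrem 4 Y) certificate (HR _) (HR _) (HR _) (HR _)) as H.
  unfold residue_ok in H. rewrite Hodd, Hnorm in H.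
  set (R := zvrem 4 Y) in *.
  change ((descends_once R || descends_twice R) && (in_code zA R || in_code (zvconj zA) R) = true)
    in H.
  rewrite andb_true_iff, !orb_true_iff in H. exact H.
Qed.

(** * Descent on the denominator *)

Definition level (N : nat) (x : V4) : Prop := exists Y, vscale (2 ^ N) x = zvec Y.

Lemma level_Ztau4 N x : level N x <-> in_Ztau4 (vscale (2 ^ N) x).
Proof. rewrite in_Ztau4_zvec. reflexivity. Qed.

Lemma level_Rring N x : level N x -> Forall in_Rring (coords x).
Proof.
  rewrite level_Ztau4. unfold in_Ztau4, vscale. rewrite !Forall_coords. cbn [c0 c1 c2 c3].
  intros (H0 & H1 & H2 & H3). repeat split; eapply Rring_Ztau; eassumption.
Qed.

Lemma Rring_level x : Forall in_Rring (coords x) -> exists N, level N x.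
Proof.
  rewrite Forall_coords. intros (H0 & H1 & H2 & H3).
  apply Ztau_Rring in H0 as (n0 & H0). apply Ztau_Rring in H1 as (n1 & H1).
  apply Ztau_Rring in H2 as (n2 & H2). apply Ztau_Rring in H3 as (n3 & H3).
  exists (n0 + n1 + n2 + n3)%nat. apply level_Ztau4. unfold in_Ztau4, vscale.
  apply Forall_coords. cbn [c0 c1 c2 c3].
  repeat split; [apply H0 | apply H1 | apply H2 | apply H3]; lia.
Qed.

Definition rcomb (X A : V4) : V4 := vsub (vscale 2 X) (vscale (dot X A) A).

Lemma vscale_vscale a b X : vscale a (vscale b X) = vscale (a * b) X.
Proof. vec_ring. Qed.

Lemma vscale_inj c X Y : c <> 0 -> vscale c X = vscale c Y -> X = Y.
Proof.
  intros Hc H. apply V4eq; apply (Rmult_eq_reg_l c); try assumption;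
    [apply (f_equal c0) in H | apply (f_equal c1) in H
    | apply (f_equal c2) in H | apply (f_equal c3) in H]; exact H.
Qed.

Lemma zvec_rcomb Y U : zvec (zrcomb Y U) = rcomb (zvec Y) (zvec U).
Proof. unfold zrcomb, rcomb. rewrite zvec_sub, !zvec_scale, ev_int, ev_zdot. reflexivity. Qed.

Lemma refl_half_vec k U x : vscale (2 * k) (refl (half_vec U) x) = rcomb (vscale k x) (zvec U).
Proof. unfold half_vec, rcomb. apply V4eq; unfold vsub, vadd, vscale, refl, dot; simpl; field. Qed.

Lemma rcomb_decomp X K A : rcomb (vadd X (vscale 4 K)) A = vadd (rcomb X A) (vscale 4 (rcomb K A)).
Proof. unfold rcomb. vec_ring. Qed.

Lemma pow2_S_S N : 2 * 2 ^ S N = 4 * 2 ^ N.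
Proof. simpl. ring. Qed.

Lemma level_even N x R K :
  vscale (2 ^ S N) x = vadd (zvec R) (vscale 4 (zvec K)) -> zvdvd 2 R = true -> level N x.
Proof.
  intros HX HR. apply zvdvd_quo in HR; [|lia].
  exists (zvadd (zvquo 2 R) (zvscale (2, 0)%Z K)).
  apply (vscale_inj 2); [lra|]. rewrite vscale_vscale, tech_pow_Rmult, HX, HR.
  rewrite zvec_add, zvec_scale, ev_int. vec_ring.
Qed.

Lemma level_refl_once N x R K U :
  vscale (2 ^ S N) x = vadd (zvec R) (vscale 4 (zvec K)) ->
  zvdvd 4 (zrcomb R U) = true -> level N (refl (half_vec U) x).
Proof.
  intros HX HU. apply zvdvd_quo in HU; [|lia]. rewrite zvec_rcomb in HU.
  exists (zvadd (zvquo 4 (zrcomb R U)) (zrcomb K U)).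
  apply (vscale_inj 4); [lra|].
  rewrite vscale_vscale, <- pow2_S_S, refl_half_vec, HX, rcomb_decomp, HU.
  rewrite zvec_add, zvec_rcomb. vec_ring.
Qed.

Lemma refl_twice_decomp N x R K U :
  vscale (2 ^ S N) x = vadd (zvec R) (vscale 4 (zvec K)) -> zdvd 2 (zdot R U) = true ->
  exists w K', In w (residues 2) /\
    vscale (2 ^ S N) (refl (half_vec U) x) =
    vadd (zvec (zvsub R (zvscale (zadd (zquo 2 (zdot R U)) (zmul (2, 0)%Z w)) U)))
         (vscale 4 (zvec K')).
Proof.
  intros HX HRU. set (d := zdot K U).
  exists (zrem 2 d), (zvsub K (zvscale (zquo 2 d) U)).
  split; [apply zrem_residues; lia|].
  apply zdvd_quo in HRU; [|lia]. rewrite ev_zdot in HRU.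
  assert (Hd : dot (zvec K) (zvec U) = ev (zrem 2 d) + 2 * ev (zquo 2 d))
    by (rewrite <- ev_zdot; apply (ev_rem_quo 2 d); lia).
  apply (vscale_inj 2); [lra|].
  rewrite vscale_vscale, refl_half_vec, HX. unfold rcomb.
  replace (dot (vadd (zvec R) (vscale 4 (zvec K))) (zvec U))
    with (2 * ev (zquo 2 (zdot R U)) + 4 * (ev (zrem 2 d) + 2 * ev (zquo 2 d)))
    by (rewrite <- HRU, <- Hd; unfold dot, vadd, vscale; simpl; ring).
  rewrite zvec_sub, !zvec_scale, ev_add, ev_mul, ev_int, zvec_sub, zvec_scale.
  vec_ring.
Qed.

Definition Sigma_level (N : nat) : Prop := forall x, dot x x = 1 -> level N x -> in_Sigma x.

Lemma gen_unit a : in_gen a -> dot a a = 1.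
Proof. intros H. apply (sphere_gen a H). Qed.

Lemma Sigma_descends_once N x R K :
  Sigma_level N -> dot x x = 1 -> vscale (2 ^ S N) x = vadd (zvec R) (vscale 4 (zvec K)) ->
  descends_once R = true -> in_Sigma x.
Proof.
  intros IH Hx HX H. unfold descends_once in H. destruct (zvdvd 2 R) eqn:Hev.
  - apply IH; [assumption | eapply level_even; eassumption].
  - rewrite exists_lazy_existsb in H. apply existsb_exists in H as (U & HU & HR).
    pose proof (roots_gen U (cert_roots_roots U HU)) as Hg.
    apply (Sigma_of_refl _ _ Hg), IH.
    + rewrite refl_dot by apply (gen_unit _ Hg). assumption.
    + eapply level_refl_once; eassumption.
Qed.

Lemma Sigma_descends_twice N x R K :
  Sigma_level N -> dot x x = 1 -> vscale (2 ^ S N) x = vadd (zvec R) (vscale 4 (zvec K)) ->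
  descends_twice R = true -> in_Sigma x.
Proof.
  intros IH Hx HX H. unfold descends_twice in H. rewrite exists_lazy_existsb in H.
  apply existsb_exists in H as (U & HU & H).
  destruct (zdvd 2 (zdot R U)) eqn:HRU; [|discriminate]. rewrite forallb_forall in H.
  pose proof (roots_gen U (cert_roots_roots U HU)) as Hg.
  destruct (refl_twice_decomp N x R K U HX HRU) as (w & K' & Hw & HX').
  apply (Sigma_of_refl _ _ Hg).
  eapply (Sigma_descends_once N _ _ K' IH); [| exact HX' | exact (H w Hw)].
  rewrite refl_dot by apply (gen_unit _ Hg). assumption.
Qed.

Lemma residue_norm N x R K :
  dot x x = 1 -> vscale (2 ^ S N) x = vadd (zvec R) (vscale 4 (zvec K)) ->
  zdvd 4 (zdot R R) = true.
Proof.
  intros Hx HX.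
  (* R.R = X.X - 8 R.K - 16 K.K with X.X = 4^(N+1). *)
  apply (zdvd_of_ev 4 _ (zsub (zsub (4 ^ Z.of_nat N, 0)%Z (zmul (2, 0)%Z (zdot R K)))
                               (zmul (4, 0)%Z (zdot K K)))); [lia|].
  assert (HXX : dot (vscale (2 ^ S N) x) (vscale (2 ^ S N) x) = 4 * 4 ^ N).
  { transitivity (2 ^ S N * 2 ^ S N * dot x x); [unfold dot, vscale; simpl; ring|].
    replace (4 ^ N) with ((2 * 2) ^ N) by (f_equal; ring).
    rewrite Hx, Rpow_mult_distr. simpl. ring. }
  rewrite HX in HXX.
  rewrite !ev_sub, !ev_mul, !ev_int, !ev_zdot, <- pow_IZR.
  unfold dot, vadd, vscale in *; simpl in *. lra.
Qed.

Lemma unit_integral_S0 Y : dot (zvec Y) (zvec Y) = 1 -> in_S0 (zvec Y).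
Proof.
  intros H. rewrite <- ev_zdot, <- (ev_int 1) in H. apply ev_inj in H.
  destruct Y as [[a0 b0] [a1 b1] [a2 b2] [a3 b3]].
  unfold zdot, zadd, zmul in H; simpl in H. injection H as H1 H2.
  (* Rational part: sum (a_i^2 + b_i^2) = 1; tau-part: sum (2 a_i b_i + b_i^2) = 0. *)
  assert (b0 = 0 /\ b1 = 0 /\ b2 = 0 /\ b3 = 0)%Z as (-> & -> & -> & ->) by nia.
  unfold zvec, ev; simpl. rewrite !Rmult_0_l, !Rplus_0_r.
  assert (Hs : forall a, (a * a = 1)%Z -> is_sign (IZR a)).
  { intros a Ha. assert (a = 1 \/ a = -1)%Z as [-> | ->] by nia; [left | right]; reflexivity. }
  destruct (Z.eq_dec a0 0) as [-> | ?]; [destruct (Z.eq_dec a1 0) as [-> | ?];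
    [destruct (Z.eq_dec a2 0) as [-> | ?] |] |].
  - exists (IZR a3), [0; 0; 0; IZR a3]. split; [apply Hs; nia | split; [|reflexivity]].
    apply Permutation_sym, (Permutation_middle [0; 0; 0] [] (IZR a3)).
  - assert (a3 = 0)%Z as -> by nia.
    exists (IZR a2), [0; 0; IZR a2; 0]. split; [apply Hs; nia | split; [|reflexivity]].
    apply Permutation_sym, (Permutation_middle [0; 0] [0] (IZR a2)).
  - assert (a2 = 0 /\ a3 = 0)%Z as [-> ->] by nia.
    exists (IZR a1), [0; IZR a1; 0; 0]. split; [apply Hs; nia | split; [|reflexivity]].
    apply Permutation_sym, (Permutation_middle [0] [0; 0] (IZR a1)).
  - assert (a1 = 0 /\ a2 = 0 /\ a3 = 0)%Z as (-> & -> & ->) by nia.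
    exists (IZR a0), [IZR a0; 0; 0; 0]. split; [apply Hs; nia | split; reflexivity].
Qed.

Lemma level0_S0 x : dot x x = 1 -> level 0 x -> in_S0 x.
Proof.
  intros Hx [Y HY]. replace x with (zvec Y) in * by (rewrite <- HY; vec_ring).
  apply unit_integral_S0, Hx.
Qed.

Lemma level_S_cases N x : dot x x = 1 -> level (S N) x ->
  level N x \/
  exists R K, vscale (2 ^ S N) x = vadd (zvec R) (vscale 4 (zvec K)) /\ zvdvd 2 R = false /\
    (descends_once R = true \/ descends_twice R = true) /\
    (in_code zA R = true \/ in_code (zvconj zA) R = true).
Proof.
  intros Hx [Y HY]. rewrite (zvec_rem_quo 4 Y) in HY by lia.
  destruct (zvdvd 2 (zvrem 4 Y)) eqn:Hev; [left; eapply level_even; eassumption | right].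
  exists (zvrem 4 Y), (zvquo 4 Y). split; [exact HY | split; [exact Hev|]].
  apply residue_cert; [exact Hev | eapply residue_norm; eassumption].
Qed.

Lemma Sigma_level_all N : Sigma_level N.
Proof.
  induction N as [|N IH]; intros x Hx HN.
  - apply Sigma_gen. left. left. apply level0_S0; assumption.
  - destruct (level_S_cases N x Hx HN) as [HN' | (R & K & HX & _ & [H | H] & _)].
    + apply IH; assumption.
    + eapply Sigma_descends_once; eassumption.
    + eapply Sigma_descends_twice; eassumption.
Qed.

(** * The sets S_n and S'_n *)

Lemma zvec_zones : zvec zones = ones.
Proof. apply V4eq; apply (ev_int 1). Qed.

Lemma zvec_zA : zvec zA = vA.
Proof. apply V4eq; unfold zvec, ev; simpl; rewrite ?tau'_eq; ring. Qed.

Lemma zvec_zA' : zvec (zvconj zA) = vA'.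
Proof. apply V4eq; unfold zvec, ev, zconj; simpl; rewrite ?tau'_eq; ring. Qed.

Lemma red_nonzero_odd N x R K :
  vscale (2 ^ S N) x = vadd (zvec R) (vscale 4 (zvec K)) -> zvdvd 2 R = false ->
  red_nonzero (vscale (2 ^ S N) x).
Proof.
  intros HX Hodd H. apply red_zero_zvec in H as (Q & HQ).
  assert (HR : zvdvd 2 R = true); [|congruence].
  apply (zvdvd_of_zvec 2 R (zvsub Q (zvscale (2, 0)%Z K))); [lia|].
  rewrite zvec_sub, zvec_scale, ev_int.
  assert (E : zvec R = vsub (vscale (2 ^ S N) x) (vscale 4 (zvec K))) by (rewrite HX; vec_ring).
  rewrite E, HQ. vec_ring.
Qed.

Lemma in_code_span N x R K V :
  vscale (2 ^ S N) x = vadd (zvec R) (vscale 4 (zvec K)) -> in_code V R = true ->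
  red_in_span ones (zvec V) (vscale (2 ^ S N) x).
Proof.
  intros HX H. unfold in_code in H. rewrite exists_lazy_existsb in H.
  apply existsb_exists in H as (k1 & _ & H).
  rewrite exists_lazy_existsb in H. apply existsb_exists in H as (k2 & _ & H).
  apply zvdvd_quo in H; [|lia]. rewrite !zvec_sub, !zvec_scale, zvec_zones in H.
  exists (ev k1), (ev k2). split; [|split]; try (apply in_Ztau_ev; eexists; reflexivity).
  set (Q := zvquo 2 _) in H.
  apply red_zero_zvec. exists (zvadd Q (zvscale (2, 0)%Z K)). rewrite zvec_add, zvec_scale, ev_int.
  transitivity (vadd (vscale 2 (zvec Q)) (vscale 4 (zvec K))); [rewrite <- H, HX|]; vec_ring.
Qed.

Lemma Sn_of_code N x R K V : dot x x = 1 -> level (S N) x ->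
  vscale (2 ^ S N) x = vadd (zvec R) (vscale 4 (zvec K)) -> zvdvd 2 R = false ->
  in_code V R = true -> in_Sn_gen (zvec V) (S N) x.
Proof.
  intros Hx HN HX Hodd Hc. split; [apply level_Ztau4, HN|]. split; [exact Hx|].
  split; [eapply in_code_span | eapply red_nonzero_odd]; eassumption.
Qed.

Lemma Sn_level N x : dot x x = 1 -> level N x -> exists n, in_Sn n x \/ in_Sn' n x.
Proof.
  revert x. induction N as [|N IH]; intros x Hx HN.
  - exists 0%nat. left. apply level0_S0; assumption.
  - destruct (level_S_cases N x Hx HN) as [HN' | (R & K & HX & Hodd & _ & [Hc | Hc])].
    + apply IH; assumption.
    + exists (S N). left. unfold in_Sn. rewrite <- zvec_zA. eapply Sn_of_code; eassumption.
    + exists (S N). right. unfold in_Sn'. rewrite <- zvec_zA'. eapply Sn_of_code; eassumption.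
Qed.

Lemma sphere_Sn v n x : in_Sn_gen v n x -> sphere_R4 x.
Proof.
  destruct n as [|n].
  - intros (s & l & Hs & Hp & ->). eapply sphere_signed_basis; eassumption.
  - intros (HZ & Hx & _). split; [exact Hx|]. apply (level_Rring (S n)), level_Ztau4, HZ.
Qed.

Lemma sphere_of_S x : (exists n, in_Sn n x \/ in_Sn' n x) -> sphere_R4 x.
Proof. intros (n & [H | H]); eapply sphere_Sn; exact H. Qed.

Lemma sphere_Sigma_Sn x : sphere_R4 x -> in_Sigma x /\ exists n, in_Sn n x \/ in_Sn' n x.
Proof.
  intros [Hx HR]. destruct (Rring_level x HR) as (N & HN).
  split; [apply (Sigma_level_all N) | apply (Sn_level N)]; assumption.
Qed.

Theorem mainTheorem6 :
  (forall x : V4, in_Sigma x <-> exists n : nat, in_Sn n x \/ in_Sn' n x) /\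
  (forall x : V4, (exists n : nat, in_Sn n x \/ in_Sn' n x) <->
                  (dot x x = 1 /\ Forall in_Rring (coords x))).
Proof.
  split; intros x; split.
  - intros H. apply sphere_Sigma_Sn, sphere_Sigma, H.
  - intros H. apply sphere_Sigma_Sn, sphere_of_S, H.
  - apply sphere_of_S.
  - intros H. apply sphere_Sigma_Sn, H.
Qed.
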